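(* Let $(X,\mathsf{d}_X)$ be a compact metric space, $\mathfrak{A}$ a unital C*-algebra, and $\varphi$ a state of $C(X,\mathfrak{A})$. Let $\|\cdot\|_{\mathsf{n}}$ be a norm on $\mathfrak{A}$ (over $\mathbb{R}$ or $\mathbb{C}$) with $M,N>0$ such that $M\|\cdot\|_{\mathsf{n}}\le\|\cdot\|_{\mathfrak{A}}\le N\|\cdot\|_{\mathsf{n}}$. Let $\mathcal{S}$ denote the state space of $C(X,\mathfrak{A})$. Then: (1)(a) if $q=C(X)$, then $\sup_{\mu,\nu\in\mathcal{S}}\mathrm{mk}_{\mathsf{L}^{(\mathsf{n}),q}_{\mathsf{d}_X}}(\mu,\nu)\le 2+N\cdot\mathrm{diam}(X,\mathsf{d}_X)$; (1)(b) if $q=C(X)$ and $\mathfrak{A}=\mathbb{C}$, then $\sup_{\mu,\nu\in\mathcal{S}}\mathrm{mk}_{\mathsf{L}^{(\mathsf{n}),q}_{\mathsf{d}_X}}(\mu,\nu)\le N\cdot\mathrm{diam}(X,\mathsf{d}_X)$; (2) if $q=\mathbb{C}$ or $q=\varphi$, then $\sup_{\mu,\nu\in\mathcal{S}}\mathrm{mk}_{\mathsf{L}^{(\mathsf{n}),q}_{\mathsf{d}_X}}(\mu,\nu)\le 2$.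
   Context: $C(X,\mathfrak{A})$ is the unital C*-algebra of continuous $\mathfrak{A}$-valued functions on $X$ (pointwise operations, supremum norm, unit constant $1_{\mathfrak{A}}$); $C(X,\mathbb{C}1_{\mathfrak{A}})$ is the subalgebra of functions with values in $\mathbb{C}1_{\mathfrak{A}}$. For $a\in C(X,\mathfrak{A})$, $l^{(\mathsf{n})}_{\mathsf{d}_X}(a)=\sup_{x\ne y}\|a(x)-a(y)\|_{\mathsf{n}}/\mathsf{d}_X(x,y)$; $\mathsf{L}^{(\mathsf{n}),C(X)}_{\mathsf{d}_X}(a)=\max\{l^{(\mathsf{n})}_{\mathsf{d}_X}(a),\inf_{b\in C(X,\mathbb{C}1_{\mathfrak{A}})}\|a-b\|\}$, $\mathsf{L}^{(\mathsf{n}),\mathbb{C}}_{\mathsf{d}_X}(a)=\max\{l^{(\mathsf{n})}_{\mathsf{d}_X}(a),\inf_{\lambda\in\mathbb{C}}\|a-\lambda1\|\}$, $\mathsf{L}^{(\mathsf{n}),\varphi}_{\mathsf{d}_X}(a)=\max\{l^{(\mathsf{n})}_{\mathsf{d}_X}(a),\|a-\varphi(a)1\|\}$ (supremum norms). For a seminorm $\mathsf{L}$ and states $\mu,\nu$, $\mathrm{mk}_{\mathsf{L}}(\mu,\nu)=\sup\{|\mu(a)-\nu(a)|: a=a^*,\ \mathsf{L}(a)\le1\}$. $\mathrm{diam}(X,\mathsf{d}_X)=\sup_{x,y}\mathsf{d}_X(x,y)$. *)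

From HB Require Import structures.
From mathcomp Require Import all_boot all_order all_algebra.
From mathcomp Require Import complex.
From mathcomp Require Import all_classical all_reals.
From mathcomp Require Import ereal.
Import Order.TTheory GRing.Theory Num.Theory.
Set Implicit Arguments. Unset Strict Implicit. Unset Printing Implicit Defensive.
Local Open Scope ring_scope.
Local Open Scope classical_set_scope.

Definition cabs (R : realType) (z : R[i]) : R := Normc.normc z.
Definition rC (R : realType) (r : R) : R[i] := real_complex R r.

Definition is_unital_Cstar (R : realType) (A : algType R[i])
  (star : A -> A) (nrm : A -> R) : Prop :=
  [/\
      [/\ (forall a, nrm a = 0 -> a = 0),
      (forall (z : R[i]) a, nrm (z *: a) = cabs z * nrm a),
      (forall a b, nrm (a + b) <= nrm a + nrm b) &
      (forall a b, nrm (a * b) <= nrm a * nrm b)],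
      [/\ forall a b, star (a + b) = star a + star b,
          forall (z : R[i]) a, star (z *: a) = z^* *: star a,
          forall a b, star (a * b) = star b * star a &
          forall a, star (star a) = a],
      (forall a, nrm (star a * a) = nrm a ^+ 2) &
      (forall u : nat -> A,
        (forall e : R, 0 < e -> exists N : nat, forall m n : nat,
             (N <= m)%N -> (N <= n)%N -> nrm (u m - u n) < e) ->
        exists l : A, forall e : R, 0 < e -> exists N : nat, forall n : nat,
             (N <= n)%N -> nrm (u n - l) < e)].

(* A norm on A viewed as a real vector space (a complex norm is in particular such a norm). *)
Definition is_real_norm (R : realType) (A : algType R[i]) (n : A -> R) : Prop :=
  [/\ forall a, n a = 0 -> a = 0,
      forall (r : R) a, n (rC r *: a) = `|r| * n a &
      forall a b, n (a + b) <= n a + n b].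

Definition is_metric (R : realType) (X : Type) (d : X -> X -> R) : Prop :=
  [/\ forall x y, d x y = 0 <-> x = y,
      forall x y, d x y = d y x &
      forall x y z, d x z <= d x y + d y z].

Definition d_open (R : realType) (X : Type) (d : X -> X -> R) (U : set X) : Prop :=
  forall x, U x -> exists2 e : R, 0 < e & forall y, d x y < e -> U y.

Definition d_compact (R : realType) (X : Type) (d : X -> X -> R) : Prop :=
  forall (I : Type) (U : I -> set X),
    (forall i, d_open d (U i)) -> (forall x, exists i, U i x) ->
    exists (k : nat) (f : 'I_k -> I), forall x, exists j, U (f j) x.

Definition diam (R : realType) (X : Type) (d : X -> X -> R) : R :=
  sup [set d p.1 p.2 | p in [set: X * X]].

Section CXA.
Variables (R : realType) (X : Type) (d : X -> X -> R) (A : algType R[i])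
  (star : A -> A) (nrm : A -> R).

Definition cont (a : X -> A) : Prop :=
  forall x (e : R), 0 < e -> exists2 del : R, 0 < del &
    forall y, d x y < del -> nrm (a x - a y) < e.

Definition supnorm (a : X -> A) : R := sup [set nrm (a x) | x in [set: X]].

Definition selfadj (a : X -> A) : Prop := forall x, star (a x) = a x.

Definition is_state (phi : (X -> A) -> R[i]) : Prop :=
  [/\ forall (z : R[i]) (f g : X -> A), cont f -> cont g ->
        phi (fun x => z *: f x + g x) = z * phi f + phi g,
      forall f : X -> A, cont f -> 0 <= phi (fun x => star (f x) * f x) &
      phi (fun _ => 1) = 1].

Definition lipn (n : A -> R) (a : X -> A) : \bar R :=
  ereal_sup [set ((n (a p.1 - a p.2)) / d p.1 p.2)%:E | p in [set p : X * X | p.1 <> p.2]].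

Definition L_CX (n : A -> R) (a : X -> A) : \bar R :=
  maxe (lipn n a)
    (inf [set supnorm (fun x => a x - b x) |
          b in [set b : X -> A | cont b /\ forall x, exists z : R[i], b x = z *: 1]])%:E.

Definition L_C (n : A -> R) (a : X -> A) : \bar R :=
  maxe (lipn n a)
    (inf [set supnorm (fun x => a x - lam *: 1) | lam in [set: R[i]]])%:E.

Definition L_phi (phi : (X -> A) -> R[i]) (n : A -> R) (a : X -> A) : \bar R :=
  maxe (lipn n a) (supnorm (fun x => a x - phi a *: 1))%:E.

Definition mk (L : (X -> A) -> \bar R) (mu nu : (X -> A) -> R[i]) : \bar R :=
  ereal_sup [set (cabs (mu a - nu a))%:E |
             a in [set a : X -> A | [/\ cont a, selfadj a & (L a <= 1%:E)%E]]].

End CXA.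

Definition starC (R : realType) (z : R[i]^o) : R[i]^o := (z : R[i])^*.
Definition absC (R : realType) (z : R[i]^o) : R := cabs (z : R[i]).

(* If a self-adjoint [a] in C(X, A) satisfies [nrm (T + a x) <= T + C] for all [x]
   (for large [T] this says [a x <= C] in the order of [A]), then [mu a <= C] for
   every state [mu]: for [C' > C] the function [z = (T + a) / (T + C')] has sup norm
   [< 1], and [1 - z = y^* y] with [y = 1 - w], where [w] is the fixed point of the
   contraction [w |-> (z + w^2) / 2]; positivity of [mu] on [y^* y] gives [mu z <= 1].
   Applied to [a] and [-a], this traps all state values [mu a] in one real interval.
   If every [a x] lies within [s] of a real scalar (for self-adjoint [a x], real
   scalars are as close as complex ones) and [nrm (a x - a y) <= L], the interval has
   length [2 s + L], and the Lipschitz condition gives [L = N diam X]; if [a] lies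
   within [s] of a single real scalar, the length is [2 s]. *)

From HB Require Import structures.
From mathcomp Require Import all_boot all_order all_algebra.
From mathcomp Require Import complex.
From mathcomp Require Import all_classical all_reals.
From mathcomp Require Import ereal topology normedtype sequences.
From mathcomp Require Import ring lra.
Import Order.TTheory GRing.Theory Num.Theory numFieldNormedType.Exports.
Local Open Scope ring_scope.

Set Implicit Arguments. Unset Strict Implicit. Unset Printing Implicit Defensive.

Lemma cabs_ge0 (R : realType) (z : R[i]) : 0 <= cabs z.
Proof. by case: z => a b; rewrite /cabs /= sqrtr_ge0. Qed.

Lemma cabs_rC (R : realType) (t : R) : cabs (rC t) = `|t|.
Proof. by rewrite /cabs /rC /= expr0n /= addr0 sqrtr_sqr. Qed.

Lemma cabs_real (R : realType) (w : R[i]) :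
  complex.Im w = 0 -> cabs w = `|complex.Re w|.
Proof. by case: w => x y /= ->; rewrite -cabs_rC. Qed.

Lemma conj_rC (R : realType) (t : R) : (rC t)^* = rC t.
Proof. exact: conjc_real. Qed.

Lemma addcJ_rC (R : realType) (z : R[i]) :
  z + z^* = rC (complex.Re z) + rC (complex.Re z).
Proof. by rewrite -mulr2n -mulr_natl; exact: addcJ. Qed.

Lemma rCD (R : realType) (s t : R) : rC (s + t) = rC s + rC t.
Proof. exact: rmorphD. Qed.

Lemma rCM (R : realType) (s t : R) : rC (s * t) = rC s * rC t.
Proof. exact: rmorphM. Qed.

Lemma rC1 (R : realType) : rC (1 : R) = 1.
Proof. exact: rmorph1. Qed.

Lemma ReB (R : realType) (z w : R[i]) :
  complex.Re (z - w) = complex.Re z - complex.Re w.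
Proof. by case: z; case: w. Qed.

Lemma ImB (R : realType) (z w : R[i]) :
  complex.Im (z - w) = complex.Im z - complex.Im w.
Proof. by case: z; case: w. Qed.

Lemma cabs_sub_le (R : realType) (l u : R) (x y : R[i]) :
  rC l <= x -> x <= rC u -> rC l <= y -> y <= rC u -> cabs (x - y) <= u - l.
Proof.
move=> lx xu ly yu.
have im0 : complex.Im (x - y) = 0.
  by move: lx ly; rewrite !lecE ImB => /andP [/eqP -> _] /andP [/eqP -> _]; rewrite subrr.
rewrite cabs_real // ReB ler_norml.
move: lx xu ly yu; rewrite !lecE => /andP [_ h1] /andP [_ h2] /andP [_ h3] /andP [_ h4].
by rewrite /rC /= in h1 h2 h3 h4; apply/andP; split; lra.
Qed.

Lemma lec_rC_from_above (R : realType) (x : R[i]) (C : R) :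
  (forall C', C < C' -> x <= rC C') -> x <= rC C.
Proof.
move=> le_x; have C1 : C < C + 1 by rewrite ltrDl.
rewrite lecE; apply/andP; split; first by move: (le_x _ C1); rewrite lecE => /andP [].
apply/ler_addgt0Pr => e e0; have Ce : C < C + e by rewrite ltrDl.
by move: (le_x _ Ce); rewrite lecE => /andP [].
Qed.

Definition cauchy_seq (R : realType) (T : zmodType) (nrm : T -> R) (u : nat -> T) :=
  forall e : R, 0 < e -> exists N : nat, forall m n : nat,
    (N <= m)%N -> (N <= n)%N -> nrm (u m - u n) < e.

Definition cvg_seq_to (R : realType) (T : zmodType) (nrm : T -> R) (u : nat -> T) (l : T) :=
  forall e : R, 0 < e -> exists N : nat, forall n : nat, (N <= n)%N -> nrm (u n - l) < e.

Section CStar.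
Variables (R : realType) (A : algType R[i]) (star : A -> A) (nrm : A -> R).
Hypothesis HA : is_unital_Cstar star nrm.

Lemma nrm_eq0 a : nrm a = 0 -> a = 0.
Proof. by case: HA => [[h ? ? ?] _ _ _]; apply: h. Qed.
Lemma nrmZ z a : nrm (z *: a) = cabs z * nrm a.
Proof. by case: HA => [[? h ? ?] _ _ _]; apply: h. Qed.
Lemma nrmD a b : nrm (a + b) <= nrm a + nrm b.
Proof. by case: HA => [[? ? h ?] _ _ _]; apply: h. Qed.
Lemma nrmM a b : nrm (a * b) <= nrm a * nrm b.
Proof. by case: HA => [[? ? ? h] _ _ _]; apply: h. Qed.
Lemma starD a b : star (a + b) = star a + star b.
Proof. by case: HA => [_ [h ? ? ?] _ _]; apply: h. Qed.
Lemma starZ z a : star (z *: a) = z^* *: star a.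
Proof. by case: HA => [_ [? h ? ?] _ _]; apply: h. Qed.
Lemma starM a b : star (a * b) = star b * star a.
Proof. by case: HA => [_ [? ? h ?] _ _]; apply: h. Qed.
Lemma starK a : star (star a) = a.
Proof. by case: HA => [_ [? ? ? h] _ _]; apply: h. Qed.
Lemma nrm_starM a : nrm (star a * a) = nrm a ^+ 2.
Proof. by case: HA => [_ _ h _]; apply: h. Qed.
Lemma nrm_complete u : cauchy_seq nrm u -> exists l, cvg_seq_to nrm u l.
Proof. by case: HA => [_ _ _ h]; apply: h. Qed.

Lemma nrm0 : nrm 0 = 0.
Proof. by rewrite -(scale0r (0 : A)) nrmZ /cabs Normc.normc0 mul0r. Qed.

Lemma nrmN a : nrm (- a) = nrm a.
Proof. by rewrite -scaleN1r nrmZ /cabs normcN Normc.normc1 mul1r. Qed.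

Lemma nrm_ge0 a : 0 <= nrm a.
Proof. by have := nrmD a (- a); rewrite subrr nrm0 nrmN; lra. Qed.

Lemma nrm_distC a b : nrm (a - b) = nrm (b - a).
Proof. by rewrite -nrmN opprB. Qed.

Lemma nrm_dist_tri a b c : nrm (a - c) <= nrm (a - b) + nrm (b - c).
Proof. by have := nrmD (a - b) (b - c); rewrite addrA subrK. Qed.

Lemma nrm_le_dist a b : nrm a <= nrm b + nrm (a - b).
Proof. by have := nrmD b (a - b); rewrite addrC subrK addrC. Qed.

Lemma nrm_sqr_sub a b : nrm (a * a - b * b) <= (nrm a + nrm b) * nrm (a - b).
Proof.
have -> : a * a - b * b = a * (a - b) + (a - b) * b.
  by rewrite mulrBr mulrBl addrA subrK.
apply: le_trans (nrmD _ _) _; rewrite (mulrDl (nrm a)) [nrm b * _]mulrC.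
by apply: lerD; apply: nrmM.
Qed.

Lemma starN a : star (- a) = - star a.
Proof. by rewrite -scaleN1r starZ rmorphN1 scaleN1r. Qed.

Lemma starB a b : star (a - b) = star a - star b.
Proof. by rewrite starD starN. Qed.

Lemma star1 : star 1 = 1.
Proof. by rewrite -[RHS]starK -[star 1]mulr1 starM starK mulr1. Qed.

Lemma nrm_star_le a : nrm a <= nrm (star a).
Proof.
have [->|a0] := eqVneq (nrm a) 0; first exact: nrm_ge0.
have apos : 0 < nrm a by rewrite lt_def a0 nrm_ge0.
by rewrite -(ler_pM2r apos) -expr2 -nrm_starM nrmM.
Qed.

Lemma nrm_star a : nrm (star a) = nrm a.
Proof. by apply/eqP; rewrite eq_le nrm_star_le -{2}(starK a) nrm_star_le. Qed.

Lemma nrm1 : nrm 1 = 1.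
Proof.
have n1 : nrm 1 != 0 by apply/eqP => /nrm_eq0/eqP; rewrite oner_eq0.
by apply: (mulfI n1); rewrite mulr1 -expr2 -nrm_starM star1 mulr1.
Qed.

Definition rscalar (t : R) : A := rC t *: 1.

Lemma nrm_rscalar t : nrm (rscalar t) = `|t|.
Proof. by rewrite nrmZ nrm1 mulr1 cabs_rC. Qed.

Lemma star_rscalar t : star (rscalar t) = rscalar t.
Proof. by rewrite /rscalar starZ conj_rC star1. Qed.

Lemma rscalarD s t : rscalar (s + t) = rscalar s + rscalar t.
Proof. by rewrite /rscalar rCD scalerDl. Qed.

Lemma rscalarB s t : rscalar (s - t) = rscalar s - rscalar t.
Proof. by rewrite /rscalar /rC rmorphB scalerBl. Qed.

Definition halve (a : A) : A := rC 2^-1 *: a.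

Lemma halve_add a : halve a + halve a = a.
Proof. by rewrite -scalerDl -rCD -[RHS]scale1r -rC1; congr (rC _ *: _); field. Qed.

Lemma halve_double a : halve (a + a) = a.
Proof. by rewrite /halve scalerDr halve_add. Qed.

Lemma nrm_halve a : nrm (halve a) = nrm a / 2.
Proof. by rewrite nrmZ cabs_rC ger0_norm ?invr_ge0 // mulrC. Qed.

Lemma nrm_double a : nrm (a + a) = 2 * nrm a.
Proof. by rewrite -[in RHS](halve_double a) nrm_halve mulrC divfK. Qed.

Lemma nrm_eq0_small a : (forall e, 0 < e -> nrm a <= e) -> a = 0.
Proof.
move=> small; apply: nrm_eq0; apply/eqP; rewrite eq_le nrm_ge0 andbT.
by apply/ler_addgt0Pr => e e0; rewrite add0r small.
Qed.

Lemma nrm_rscalar_shift_le b l s T :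
  nrm (b - rscalar l) <= s -> `|l| <= T ->
  nrm (rscalar T + b) <= T + (l + s) /\ nrm (rscalar T - b) <= T - (l - s).
Proof.
move=> bl /ler_normlP [lT1 lT2]; split.
  have -> : rscalar T + b = rscalar (T + l) + (b - rscalar l).
    by rewrite rscalarD addrACA subrr addr0.
  by apply: le_trans (nrmD _ _) _; rewrite nrm_rscalar ger0_norm; lra.
have -> : rscalar T - b = rscalar (T - l) + (rscalar l - b).
  by rewrite rscalarB addrA subrK.
by apply: le_trans (nrmD _ _) _; rewrite nrm_rscalar nrm_distC ger0_norm; lra.
Qed.

(* Self-adjointness of [a] makes [a - Re z] the average of [a - z] and its adjoint. *)
Lemma nrm_sub_Re a z : star a = a -> nrm (a - rscalar (complex.Re z)) <= nrm (a - z *: 1).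
Proof.
move=> sa; set w := a - rscalar _; rewrite -[w]halve_double.
have -> : w + w = (a - z *: 1) + star (a - z *: 1).
  rewrite starB sa starZ star1 [LHS]addrACA [RHS]addrACA -!opprD -!scalerDl.
  by rewrite addcJ_rC.
rewrite nrm_halve ler_pdivrMr //.
by apply: le_trans (nrmD _ _) _; rewrite nrm_star; lra.
Qed.

End CStar.

Lemma exists_expr_lt (R : realType) (rho e : R) : 0 <= rho -> rho < 1 -> 0 < e ->
  exists N : nat, rho ^+ N < e.
Proof.
move=> rho0 rho1 e0; have nrho1 : `|rho| < 1 by rewrite ger0_norm.
have /cvgrPdist_lt /(_ e e0) [N _ hN] := cvg_expr nrho1.
by exists N; have := hN N (leqnn N); rewrite /= sub0r normrN normrX ger0_norm.
Qed.

Section HalfSquareFixpoint.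
Variables (R : realType) (A : algType R[i]) (star : A -> A) (nrm : A -> R).
Hypothesis HA : is_unital_Cstar star nrm.

Lemma half_sqr_fix_lipschitz (rho : R) b1 b2 w1 w2 :
  w1 + w1 = b1 + w1 * w1 -> w2 + w2 = b2 + w2 * w2 ->
  nrm w1 <= rho -> nrm w2 <= rho ->
  2 * (1 - rho) * nrm (w1 - w2) <= nrm (b1 - b2).
Proof.
move=> e1 e2 n1 n2.
have hd : 2 * nrm (w1 - w2) <= nrm (b1 - b2) + nrm (w1 * w1 - w2 * w2).
  rewrite -(nrm_double HA) addrACA -opprD e1 e2 opprD addrACA; exact: (nrmD HA).
have := nrm_sqr_sub HA w1 w2; have := nrm_ge0 HA (w1 - w2); nra.
Qed.

(* The bound on [nrm b] makes [w |-> (b + w * w) / 2] map the ball of radius [rho]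
   into itself, where it is a [rho]-contraction. *)
Section Iteration.
Variables (b : A) (rho : R).
Hypotheses (rho_ge0 : 0 <= rho) (rho_lt1 : rho < 1) (nrm_b : nrm b <= rho * (2 - rho)).

Let W k := iter k (fun w => halve (b + w * w)) 0.

Let W_bound k : nrm (W k) <= rho.
Proof.
elim: k => [|k IH]; first by rewrite /W /= (nrm0 HA).
rewrite /W iterS -/(W k) (nrm_halve HA) ler_pdivrMr //; move: (W k) IH => w IH.
have := nrmD HA b (w * w); have := nrmM HA w w.
have := ler_pM (nrm_ge0 HA _) (nrm_ge0 HA _) IH IH; have := nrm_b; lra.
Qed.

Let W_succ k : W k.+1 + W k.+1 = b + W k * W k.
Proof. exact: halve_add. Qed.

Let W_step k : nrm (W k.+1 - W k) <= rho ^+ k.+1.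
Proof.
elim: k => [|k IH]; first by rewrite subr0 expr1 W_bound.
have e : W k.+2 - W k.+1 = halve (W k.+1 * W k.+1 - W k * W k).
  by rewrite [in LHS]/W !iterS -/(W k) -scalerBr opprD addrACA subrr add0r.
rewrite e (nrm_halve HA) ler_pdivrMr // exprS.
have := nrm_sqr_sub HA (W k.+1) (W k); have := W_bound k; have := W_bound k.+1.
have := nrm_ge0 HA (W k.+1 - W k); have := exprn_ge0 k.+1 rho_ge0; have := rho_ge0; nra.
Qed.

Let W_tail n j : (1 - rho) * nrm (W (n + j) - W n) <= rho ^+ n.+1 * (1 - rho ^+ j).
Proof.
elim: j => [|j IH]; first by rewrite addn0 subrr (nrm0 HA) expr0 subrr !mulr0.
have step := W_step (n + j).
have e : rho ^+ (n + j).+1 = rho ^+ n.+1 * rho ^+ j by rewrite -exprD addSn.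
rewrite e in step; rewrite addnS [rho ^+ j.+1]exprS.
have := nrm_dist_tri HA (W (n + j).+1) (W (n + j)) (W n).
have := exprn_ge0 n.+1 rho_ge0; have := exprn_ge0 j rho_ge0; have := rho_lt1; nra.
Qed.

Let W_cauchy : cauchy_seq nrm W.
Proof.
have rho1 : 0 < 1 - rho by rewrite subr_gt0.
move=> e e0; have [N hN] := exists_expr_lt rho_ge0 rho_lt1 (mulr_gt0 e0 rho1).
have near_le p q : (N <= p)%N -> (p <= q)%N -> nrm (W q - W p) < e.
  move=> Np /subnKC <-; rewrite -(ltr_pM2l rho1).
  apply: le_lt_trans (W_tail p (q - p)) _.
  have := ler_wiXn2l rho_ge0 (ltW rho_lt1) (leqW Np).
  have := exprn_ge0 (q - p) rho_ge0; have := exprn_ge0 p.+1 rho_ge0; nra.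
exists N => m n Nm Nn; have [mn|nm] := leqP m n.
  by rewrite (nrm_distC HA); apply: near_le.
by apply: near_le => //; apply: ltnW.
Qed.

Lemma half_sqr_fix_exists : exists2 w, nrm w <= rho & w + w = b + w * w.
Proof.
have [w hw] := nrm_complete HA W_cauchy.
have w_bound : nrm w <= rho.
  apply/ler_addgt0Pr => e e0; have [N hN] := hw e e0.
  have := nrm_le_dist HA w (W N); rewrite (nrm_distC HA w).
  have := hN N (leqnn N); have := W_bound N; lra.
exists w => //; apply/eqP; rewrite -subr_eq0; apply/eqP/(nrm_eq0_small HA) => e e0.
have [N hN] := hw (e / 4) (divr_gt0 e0 (ltr0Sn _ 3)).
have h1 := hN N.+1 (leqnSn N); have h2 := hN N (leqnn N).
have e1 : w + w - (W N.+1 + W N.+1) = (w - W N.+1) + (w - W N.+1) by rewrite opprD addrACA.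
have e2 : b + W N * W N - (b + w * w) = W N * W N - w * w.
  by rewrite opprD addrACA subrr add0r.
apply: le_trans (nrm_dist_tri HA _ (W N.+1 + W N.+1) _) _.
rewrite [X in _ + nrm (X - _)]W_succ e1 e2 (nrm_double HA) (nrm_distC HA w).
have := nrm_sqr_sub HA (W N) w; have := W_bound N; have := nrm_ge0 HA (W N - w).
have := rho_lt1; nra.
Qed.

End Iteration.

Lemma half_sqr_fix_selfadj b rho : 0 <= rho -> rho < 1 ->
  nrm b <= rho * (2 - rho) -> star b = b ->
  exists w, [/\ nrm w <= rho, star w = w & w + w = b + w * w].
Proof.
move=> rho0 rho1 nb sb; have [w wb ew] := half_sqr_fix_exists rho0 rho1 nb.
exists w; split => //.
have ew' : star w + star w = b + star w * star w.
  by rewrite -(starD HA) ew (starD HA) (starM HA) sb.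
have wb' : nrm (star w) <= rho by rewrite (nrm_star HA).
have := half_sqr_fix_lipschitz ew' ew wb' wb; rewrite subrr (nrm0 HA) => lip.
apply/eqP; rewrite -subr_eq0; apply/eqP/(nrm_eq0 HA)/eqP.
by rewrite eq_le (nrm_ge0 HA) andbT; have := nrm_ge0 HA (star w - w); nra.
Qed.

Lemma star_one_sub_mul b w : star w = w -> w + w = b + w * w ->
  star (1 - w) * (1 - w) = 1 - b.
Proof.
move=> sw ew; have -> : b = w + w - w * w by rewrite ew addrK.
rewrite (starB HA) (star1 HA) sw mulrBl mul1r mulrBr mulr1 !opprB opprD !addrA.
by rewrite [1 - w + _]addrAC.
Qed.

End HalfSquareFixpoint.

Section Continuity.
Variables (R : realType) (X : Type) (d : X -> X -> R) (A : algType R[i])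
  (star : A -> A) (nrm : A -> R).
Hypothesis HA : is_unital_Cstar star nrm.

Lemma cont_const (c : A) : cont d nrm (fun _ => c).
Proof. by move=> x e e0; exists 1 => // y _; rewrite subrr (nrm0 HA). Qed.

Lemma cont_lin z (f g : X -> A) : cont d nrm f -> cont d nrm g ->
  cont d nrm (fun x => z *: f x + g x).
Proof.
move=> cf cg x e e0; set c := cabs z + 1.
have c0 : 0 < c by rewrite /c ltr_pwDr ?cabs_ge0.
have e'0 : 0 < e / (2 * c) by rewrite divr_gt0 ?mulr_gt0.
have [d1 d10 h1] := cf x _ e'0; have [d2 d20 h2] := cg x _ e'0.
exists (Order.min d1 d2); first by rewrite lt_min d10 d20.
move=> y; rewrite lt_min => /andP [/h1 lt1 /h2 lt2].
rewrite opprD addrACA -scalerBr; apply: le_lt_trans (nrmD HA _ _) _; rewrite (nrmZ HA).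
have ce : c * (e / (2 * c)) = e / 2 by field; rewrite gt_eqF.
have := cabs_ge0 z; have := nrm_ge0 HA (f x - f y); rewrite /c in ce c0; nra.
Qed.

Lemma cont_sub (f g : X -> A) : cont d nrm f -> cont d nrm g -> cont d nrm (fun x => f x - g x).
Proof.
move=> cf cg; have := cont_lin (-1) cg cf.
by congr cont; apply: funext => x; rewrite scaleN1r addrC.
Qed.

Lemma cont_lipschitz (f g : X -> A) (c : R) : 0 < c ->
  (forall x y, c * nrm (f x - f y) <= nrm (g x - g y)) -> cont d nrm g -> cont d nrm f.
Proof.
move=> c0 lip cg x e e0; have [del del0 hdel] := cg x _ (mulr_gt0 c0 e0).
exists del => // y /hdel lt; rewrite -(ltr_pM2l c0); exact: le_lt_trans (lip x y) lt.
Qed.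

Lemma cont_sqrt_one_sub (z : X -> A) (r : R) : 0 <= r -> r < 1 ->
  cont d nrm z -> selfadj star z -> (forall x, nrm (z x) <= r) ->
  exists y : X -> A, cont d nrm y /\ forall x, star (y x) * y x = 1 - z x.
Proof.
move=> r0 r1 cz sz bz; set rho := (1 + r) / 2.
have rho0 : 0 <= rho by rewrite /rho divr_ge0 //; lra.
have rho1 : rho < 1 by rewrite /rho ltr_pdivrMr //; lra.
have bz' x : nrm (z x) <= rho * (2 - rho) by have := bz x; rewrite /rho; nra.
have /choice [w hw] : forall x,
    exists w, [/\ nrm w <= rho, star w = w & w + w = z x + w * w].
  by move=> x; apply: (half_sqr_fix_selfadj HA rho0 rho1 (bz' x) (sz x)).
exists (fun x => 1 - w x); split; last first.
  by move=> x; have [_ sw ew] := hw x; exact: (star_one_sub_mul HA).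
apply: cont_sub (cont_const 1) _; apply: (cont_lipschitz (c := 2 * (1 - rho))) cz.
  by rewrite mulr_gt0 // subr_gt0.
move=> x y; have [bx _ ex] := hw x; have [byy _ ey] := hw y.
exact: (half_sqr_fix_lipschitz HA ex ey bx byy).
Qed.

End Continuity.

Section Compactness.
Variables (R : realType) (X : Type) (d : X -> X -> R).
Hypotheses (Hd : is_metric d) (Hc : d_compact d).

Lemma d_compact_bounded (g : X -> R) : (forall x, 0 <= g x) ->
  (forall x e, 0 < e -> exists2 del, 0 < del & forall y, d x y < del -> g y < g x + e) ->
  exists K, forall x, g x <= K.
Proof.
move=> g0 usc; pose U (n : nat) : set X := fun x => g x < n%:R.
have U_open n : d_open d (U n).
  move=> x Ux; have gxn : 0 < n%:R - g x by rewrite subr_gt0.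
  have [del del0 hdel] := usc x _ gxn; exists del => // y /hdel; rewrite /U; lra.
have U_cover x : exists n, U n x.
  by exists (Num.Def.archi_bound (g x)); apply: archi_boundP.
have [k [f cover]] := Hc U_open U_cover.
exists (\max_(j < k) f j)%:R => x; have [j Ux] := cover x.
by apply/ltW/(lt_le_trans Ux); rewrite ler_nat (bigD1 j) //= leq_maxl.
Qed.

Lemma d_ge0 x y : 0 <= d x y.
Proof.
case: Hd => d0 dC dtri; have := dtri x y x; rewrite (dC y x) (proj2 (d0 x x) erefl).
lra.
Qed.

Lemma le_diam x y : d x y <= diam d.
Proof.
case: Hd => _ dC dtri.
have [D hD] : exists D, forall y, d x y <= D.
  apply: d_compact_bounded => [z|z e e0]; first exact: d_ge0.
  by exists e => // t zt; have := dtri x z t; lra.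
apply: sup_upper_bound; last by exists (x, y).
split; first by exists (d x y), (x, y).
exists (D + D) => _ [[p q] _ <-] /=.
by have := dtri p x q; have := dC p x; have := hD p; have := hD q; lra.
Qed.

Variables (A : algType R[i]) (star : A -> A) (nrm : A -> R).
Hypothesis HA : is_unital_Cstar star nrm.

Lemma cont_bounded (f : X -> A) : cont d nrm f -> exists K, forall x, nrm (f x) <= K.
Proof.
move=> cf; apply: d_compact_bounded => [x|x e e0]; first exact: nrm_ge0 HA _.
have [del del0 hdel] := cf x e e0; exists del => // y /hdel.
by have := nrm_le_dist HA (f y) (f x); rewrite (nrm_distC HA (f y)); lra.
Qed.

Lemma le_supnorm (f : X -> A) x : cont d nrm f -> nrm (f x) <= supnorm nrm f.
Proof.
move=> cf; have [K hK] := cont_bounded cf.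
apply: sup_upper_bound; last by exists x.
by split; [exists (nrm (f x)), x | exists K => _ [y _ <-]].
Qed.

End Compactness.

Section State.
Variables (R : realType) (X : Type) (d : X -> X -> R) (A : algType R[i])
  (star : A -> A) (nrm : A -> R).
Hypothesis HA : is_unital_Cstar star nrm.
Variable mu : (X -> A) -> R[i].
Hypothesis Hmu : is_state d star nrm mu.

Lemma state_lin z f g : cont d nrm f -> cont d nrm g ->
  mu (fun x => z *: f x + g x) = z * mu f + mu g.
Proof. by case: Hmu => h _ _; apply: h. Qed.

Lemma state_ge0 f : cont d nrm f -> 0 <= mu (fun x => star (f x) * f x).
Proof. by case: Hmu => _ h _; apply: h. Qed.

Lemma state1 : mu (fun _ => 1) = 1.
Proof. by case: Hmu. Qed.

Lemma state0 : mu (fun _ => 0) = 0.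
Proof.
have := state_lin 1 (cont_const d HA 0) (cont_const d HA 0).
have -> : (fun _ : X => 1 *: (0 : A) + 0) = (fun _ => 0).
  by apply: funext => x; rewrite scaler0 addr0.
by rewrite mul1r => /esym/eqP; rewrite -subr_eq0 addrK => /eqP.
Qed.

Lemma state_scalar w : mu (fun _ => w *: 1) = w.
Proof.
have := state_lin w (cont_const d HA 1) (cont_const d HA 0).
by rewrite state1 state0 mulr1 !addr0.
Qed.

Lemma stateN f : cont d nrm f -> mu (fun x => - f x) = - mu f.
Proof.
move=> cf; have := state_lin (-1) cf (cont_const d HA 0).
rewrite state0 addr0 mulN1r => <-.
by congr mu; apply: funext => x; rewrite scaleN1r addr0.
Qed.

Lemma state_inhabited : inhabited X.
Proof.
case: (pselect (inhabited X)) => // noX.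
have : (fun _ : X => 1 : A) = (fun _ => 0) by apply: funext => x; case: noX; constructor.
by move/(congr1 mu); rewrite state1 state0 => /eqP; rewrite oner_eq0.
Qed.

(* Positivity of [mu] is only assumed on functions [star f * f]; the square root of
   [1 - z] puts [1 - z] in that form. *)
Lemma state_le1 z r : 0 <= r -> r < 1 -> cont d nrm z -> selfadj star z ->
  (forall x, nrm (z x) <= r) -> mu z <= 1.
Proof.
move=> r0 r1 cz sz bz; have [y [cy hy]] := cont_sqrt_one_sub HA r0 r1 cz sz bz.
have := state_ge0 cy.
have -> : (fun x => star (y x) * y x) = (fun x => (-1) *: z x + 1 *: 1).
  by apply: funext => x; rewrite hy scaleN1r scale1r addrC.
by rewrite (state_lin _ cz (cont_const d HA _)) state_scalar mulN1r addrC subr_ge0.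
Qed.

Lemma state_le a T C : cont d nrm a -> selfadj star a ->
  (forall x, nrm (rscalar A T + a x) <= T + C) -> mu a <= rC C.
Proof.
move=> ca sa hb; have [x0] := state_inhabited.
have TC : 0 <= T + C by apply: le_trans (hb x0); exact: nrm_ge0 HA _.
apply: lec_rC_from_above => C' CC'; set c := (T + C')^-1.
have c0 : 0 < c by rewrite invr_gt0; lra.
have cTC : c * (T + C') = 1 by rewrite mulVf //; apply/eqP => h; lra.
pose z x := rC c *: a x + rscalar A (c * T).
have cz : cont d nrm z := cont_lin HA (rC c) ca (cont_const d HA _).
have sz : selfadj star z.
  by move=> x; rewrite /z (starD HA) (starZ HA) conj_rC sa (star_rscalar HA).
have bz x : nrm (z x) <= c * (T + C).
  rewrite /z /rscalar rCM -scalerA -scalerDr (nrmZ HA) cabs_rC (ger0_norm (ltW c0)).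
  by rewrite [a x + _]addrC; apply: ler_wpM2l; [exact: ltW | exact: hb].
have r1 : c * (T + C) < 1 by rewrite -cTC ltr_pM2l //; lra.
have := state_le1 (mulr_ge0 (ltW c0) TC) r1 cz sz bz.
rewrite /z /rscalar (state_lin _ ca (cont_const d HA _)) state_scalar.
case: (mu a) => p q; rewrite !lecE /rC /= !(mul0r, mulr0, addr0, subr0, add0r).
move=> /andP [/eqP q0 pC]; apply/andP; split; first by apply/eqP; nra.
nra.
Qed.

Lemma state_ge a T C : cont d nrm a -> selfadj star a ->
  (forall x, nrm (rscalar A T - a x) <= T - C) -> rC C <= mu a.
Proof.
move=> ca sa hb.
have cna : cont d nrm (fun x => - a x).
  by have := cont_sub HA (cont_const d HA 0) ca; congr cont; apply: funext => x; rewrite sub0r.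
have sna : selfadj star (fun x => - a x) by move=> x; rewrite (starN HA) sa.
by have := state_le cna sna hb; rewrite (stateN ca) /rC rmorphN lerN2.
Qed.

End State.

Section TwoStates.
Variables (R : realType) (X : Type) (d : X -> X -> R) (A : algType R[i])
  (star : A -> A) (nrm : A -> R).
Hypotheses (HA : is_unital_Cstar star nrm) (Hc : d_compact d).
Variables mu nu : (X -> A) -> R[i].
Hypotheses (Hmu : is_state d star nrm mu) (Hnu : is_state d star nrm nu).
Variable a : X -> A.
Hypotheses (ca : cont d nrm a) (sa : selfadj star a).

Lemma states_dist_le T Cl Cu :
  (forall x, nrm (rscalar A T + a x) <= T + Cu) ->
  (forall x, nrm (rscalar A T - a x) <= T - Cl) -> cabs (mu a - nu a) <= Cu - Cl.
Proof.
move=> up lo; apply: cabs_sub_le.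
- exact: (state_ge HA Hmu ca sa lo).
- exact: (state_le HA Hmu ca sa up).
- exact: (state_ge HA Hnu ca sa lo).
- exact: (state_le HA Hnu ca sa up).
Qed.

Lemma states_dist_le_near_scalar l s : (forall x, nrm (a x - rscalar A l) <= s) ->
  cabs (mu a - nu a) <= 2 * s.
Proof.
move=> near; have bounds x := nrm_rscalar_shift_le HA (near x) (lexx `|l|).
apply: le_trans (@states_dist_le `|l| (l - s) (l + s) _ _) _.
- by move=> x; case: (bounds x).
- by move=> x; case: (bounds x).
- lra.
Qed.

Lemma states_dist_le_oscillation s L : 0 <= s ->
  (forall y, exists l, nrm (a y - rscalar A l) <= s) ->
  (forall x y, nrm (a x - a y) <= L) -> cabs (mu a - nu a) <= 2 * s + L.
Proof.
move=> s0 near osc; have [K hK] := cont_bounded Hc HA ca.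
have [x0] := state_inhabited HA Hmu; set T := K + s.
have T0 : 0 <= T by rewrite /T; have := hK x0; have := nrm_ge0 HA (a x0); lra.
have lT y l : nrm (a y - rscalar A l) <= s -> `|l| <= T.
  move=> yl; rewrite -(nrm_rscalar HA) /T.
  have := nrm_le_dist HA (rscalar A l) (a y); rewrite (nrm_distC HA (rscalar A l)).
  have := hK y; lra.
pose E := [set nrm (rscalar A T + a x) - T | x in [set: X]]%classic.
have E_ub : ubound E K.
  move=> _ [x _ <-]; have := nrmD HA (rscalar A T) (a x).
  rewrite (nrm_rscalar HA) ger0_norm //; have := hK x; lra.
have E_sup : has_sup E by split; [exists (nrm (rscalar A T + a x0) - T), x0 | exists K].
have le_u x : nrm (rscalar A T + a x) <= T + sup E.
  have : nrm (rscalar A T + a x) - T <= sup E by apply: sup_upper_bound => //; exists x.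
  lra.
have u_le y l : nrm (a y - rscalar A l) <= s -> sup E <= l + s + L.
  move=> yl; apply: ge_sup; first by case: E_sup.
  move=> _ [x _ <-]; have [up _] := nrm_rscalar_shift_le HA yl (lT y l yl).
  have -> : rscalar A T + a x = (rscalar A T + a y) + (a x - a y).
    by rewrite addrACA subrr addr0.
  have := nrmD HA (rscalar A T + a y) (a x - a y); have := osc x y; lra.
apply: le_trans (@states_dist_le T (sup E - (2 * s + L)) (sup E) le_u _) _; last lra.
move=> y; have [l yl] := near y; have [_ lo] := nrm_rscalar_shift_le HA yl (lT y l yl).
have := u_le y l yl; lra.
Qed.

End TwoStates.

Lemma mk_le (R : realType) (X : Type) (d : X -> X -> R) (A : algType R[i])
  (star : A -> A) (nrm : A -> R) (L : (X -> A) -> \bar R) mu nu (B : R) :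
  (forall a, cont d nrm a -> selfadj star a -> (L a <= 1%:E)%E -> cabs (mu a - nu a) <= B) ->
  (mk d star nrm L mu nu <= B%:E)%E.
Proof. by move=> h; apply: ge_ereal_sup => _ [a [ca sa La] <-]; rewrite lee_fin h. Qed.

Section MongeKantorovichBounds.
Variables (R : realType) (X : Type) (d : X -> X -> R).
Hypotheses (Hd : is_metric d) (Hc : d_compact d).
Variables (A : algType R[i]) (star : A -> A) (nrm : A -> R).
Hypothesis HA : is_unital_Cstar star nrm.
Variables mu nu : (X -> A) -> R[i].
Hypotheses (Hmu : is_state d star nrm mu) (Hnu : is_state d star nrm nu).

Lemma lipn_le1_dist (n : A -> R) (N : R) (a : X -> A) : 0 < N ->
  (forall b, nrm b <= N * n b) -> (lipn d n a <= 1%:E)%E ->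
  forall x y, nrm (a x - a y) <= N * diam d.
Proof.
move=> N0 hN lip x y; have dxy := le_diam Hd Hc x y.
have [<-|xy] := pselect (x = y).
  rewrite subrr (nrm0 HA); apply: mulr_ge0; first exact: ltW.
  exact: le_trans (d_ge0 Hd x x) (le_diam Hd Hc x x).
have dxy0 : 0 < d x y.
  by rewrite lt_def d_ge0 // andbT; apply/eqP; case: Hd => d0 _ _ /d0.
have : ((n (a x - a y) / d x y)%:E <= lipn d n a)%E by apply: ereal_sup_ubound; exists (x, y).
move=> /le_trans /(_ lip); rewrite lee_fin ler_pdivrMr // mul1r => nd.
by apply: le_trans (hN _) _; rewrite ler_pM2l //; exact: le_trans nd dxy.
Qed.

Lemma mk_L_CX_le (n : A -> R) (N : R) : 0 < N -> (forall b, nrm b <= N * n b) ->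
  (mk d star nrm (L_CX d nrm n) mu nu <= (2 + N * diam d)%:E)%E.
Proof.
move=> N0 hN; apply: mk_le => a ca sa; rewrite /L_CX ge_max lee_fin => /andP [lip].
set S := (X in inf X) => dist; have osc := lipn_le1_dist N0 hN lip.
apply/ler_addgt0Pr => e e0; set s := 1 + e / 2.
have s1 : 1 < s by rewrite /s; lra.
have S0 : (S !=set0)%classic.
  exists (supnorm nrm (fun x => a x - 0)), (fun _ => 0) => //.
  by split; [exact: (cont_const d HA) | move=> x; exists 0; rewrite scale0r].
have [_ [b [cb bsc] <-] bs] := inf_lt S0 (le_lt_trans dist s1).
have near y : exists l, nrm (a y - rscalar A l) <= s.
  have [z bz] := bsc y; exists (complex.Re z); apply: le_trans (nrm_sub_Re HA z (sa y)) _.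
  by rewrite -bz; apply/ltW/(le_lt_trans _ bs)/(le_supnorm Hc HA y (cont_sub HA ca cb)).
have := states_dist_le_oscillation HA Hc Hmu Hnu ca sa (ltW (lt_trans ltr01 s1)) near osc.
by move/le_trans; apply; rewrite /s; lra.
Qed.

Lemma mk_L_C_le (n : A -> R) : (mk d star nrm (L_C d nrm n) mu nu <= 2%:E)%E.
Proof.
apply: mk_le => a ca sa; rewrite /L_C ge_max lee_fin => /andP [_].
set S := (X in inf X) => dist.
apply/ler_addgt0Pr => e e0; set s := 1 + e / 2.
have s1 : 1 < s by rewrite /s; lra.
have S0 : (S !=set0)%classic by exists (supnorm nrm (fun x => a x - 0 *: 1)), 0.
have [_ [lam _ <-] ls] := inf_lt S0 (le_lt_trans dist s1).
have near x : nrm (a x - rscalar A (complex.Re lam)) <= s.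
  apply: le_trans (nrm_sub_Re HA lam (sa x)) _; apply/ltW/(le_lt_trans _ ls).
  exact: (le_supnorm Hc HA x (cont_sub HA ca (cont_const d HA _))).
have := states_dist_le_near_scalar HA Hmu Hnu ca sa near.
by move/le_trans; apply; rewrite /s; lra.
Qed.

Lemma mk_L_phi_le phi (n : A -> R) : (mk d star nrm (L_phi d nrm phi n) mu nu <= 2%:E)%E.
Proof.
apply: mk_le => a ca sa; rewrite /L_phi ge_max lee_fin => /andP [_ dist].
have near x : nrm (a x - rscalar A (complex.Re (phi a))) <= 1.
  apply: le_trans (nrm_sub_Re HA (phi a) (sa x)) _; apply: le_trans dist.
  exact: (le_supnorm Hc HA x (cont_sub HA ca (cont_const d HA _))).
by rewrite -[2]mulr1; apply: (states_dist_le_near_scalar HA Hmu Hnu ca sa near).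
Qed.

End MongeKantorovichBounds.

Lemma real_complete (R : realType) (u : nat -> R) :
  cauchy_seq (fun x : R => `|x|) u -> exists l, cvg_seq_to (fun x : R => `|x|) u l.
Proof.
move=> hc; have /cauchy_cvgP cu : cauchy (u @ \oo)%classic.
  apply: cauchy_exP => e e0; have [N hN] := hc e e0.
  by exists (u N), N => // n /= Nn; rewrite -ball_normE /ball_ /=; apply: hN.
exists (limn u) => e e0; have /cvgrPdist_lt /(_ e e0) [N _ hN] := cu.
by exists N => n hn; rewrite distrC; apply: hN.
Qed.

Lemma cabs_Re_le (R : realType) (w : R[i]) : `|complex.Re w| <= cabs w.
Proof. by case: w => x y; rewrite /cabs /= -sqrtr_sqr ler_wsqrtr // lerDl sqr_ge0. Qed.

Lemma cabs_Im_le (R : realType) (w : R[i]) : `|complex.Im w| <= cabs w.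
Proof. by case: w => x y; rewrite /cabs /= -sqrtr_sqr ler_wsqrtr // lerDr sqr_ge0. Qed.

Lemma cabs_le_Re_Im (R : realType) (w : R[i]) : cabs w <= `|complex.Re w| + `|complex.Im w|.
Proof.
case: w => x y; rewrite [X in cabs X](_ : _ = rC x + (0 +i* y)%C); last first.
  by apply/eqP; rewrite eq_complex /= addr0 add0r !eqxx.
apply: le_trans (le_normcD _ _) _; rewrite -/(cabs (rC x)) cabs_rC.
by rewrite /= expr0n /= add0r sqrtr_sqr.
Qed.

Lemma complex_complete (R : realType) (u : nat -> R[i]) :
  cauchy_seq (@cabs R) u -> exists l, cvg_seq_to (@cabs R) u l.
Proof.
move=> hu.
have [lr hlr] : exists lr, cvg_seq_to (fun x : R => `|x|) (fun n => complex.Re (u n)) lr.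
  apply: real_complete => e e0; have [N hN] := hu e e0; exists N => m n hm hn.
  by rewrite -ReB; apply: le_lt_trans (cabs_Re_le _) (hN m n hm hn).
have [li hli] : exists li, cvg_seq_to (fun x : R => `|x|) (fun n => complex.Im (u n)) li.
  apply: real_complete => e e0; have [N hN] := hu e e0; exists N => m n hm hn.
  by rewrite -ImB; apply: le_lt_trans (cabs_Im_le _) (hN m n hm hn).
exists (lr +i* li)%C => e e0; have e2 : 0 < e / 2 by rewrite divr_gt0.
have [N1 h1] := hlr _ e2; have [N2 h2] := hli _ e2.
exists (maxn N1 N2) => n hn; apply: le_lt_trans (cabs_le_Re_Im _) _; rewrite ReB ImB /=.
have := h1 n (leq_trans (leq_maxl _ _) hn); have := h2 n (leq_trans (leq_maxr _ _) hn).
lra.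
Qed.

Lemma complex_Cstar (R : realType) : is_unital_Cstar (@starC R) (@absC R).
Proof.
rewrite /absC /starC; split.
- split.
  + by move=> a /Normc.eq0_normc.
  + by move=> z a; rewrite /cabs Normc.normcM.
  + by move=> a b; apply: le_normcD.
  + by move=> a b; rewrite /cabs Normc.normcM.
- split.
  + by move=> a b; rewrite rmorphD.
  + by move=> z a; rewrite /= rmorphM.
  + by move=> a b; rewrite /= rmorphM mulrC.
  + by move=> a; rewrite conjCK.
- move=> a; rewrite /cabs /= Normc.normcM expr2; congr (_ * _).
  by case: a => x y /=; rewrite sqrrN.
- exact: complex_complete.
Qed.

Lemma mk_L_CX_le_complex (R : realType) (X : Type) (d : X -> X -> R) :
  is_metric d -> d_compact d -> forall mu nu : (X -> R[i]^o) -> R[i],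
  is_state d (@starC R) (@absC R) mu -> is_state d (@starC R) (@absC R) nu ->
  forall (n : R[i]^o -> R) (N : R), 0 < N -> (forall b, absC b <= N * n b) ->
  (mk d (@starC R) (@absC R) (L_CX d (@absC R) n) mu nu <= (N * diam d)%:E)%E.
Proof.
move=> Hd Hc mu nu Hmu Hnu n N N0 hN; have HA := complex_Cstar R.
apply: mk_le => a ca sa; rewrite /L_CX ge_max => /andP [lip _].
have near y : exists l, absC (a y - rscalar _ l) <= 0.
  exists (complex.Re (a y)); apply: le_trans (nrm_sub_Re HA (a y) (sa y)) _.
  by rewrite -[a y *: 1]/(a y * 1) mulr1 subrr (nrm0 HA).
have := states_dist_le_oscillation HA Hc Hmu Hnu ca sa (lexx 0) near
  (lipn_le1_dist Hd Hc HA N0 hN lip).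
by rewrite mulr0 add0r.
Qed.

Unset Implicit Arguments.

Theorem proposition2p10 (R : realType) (X : Type) (d : X -> X -> R) :
  is_metric d -> d_compact d ->
  (* parts (1)(a) and (2): a general unital C*-algebra A *)
  (forall (A : algType R[i]) (star : A -> A) (nrm : A -> R),
    is_unital_Cstar star nrm ->
    forall (phi : (X -> A) -> R[i]), is_state d star nrm phi ->
    forall (n : A -> R) (M N : R), is_real_norm n -> 0 < M -> 0 < N ->
      (forall a, M * n a <= nrm a) -> (forall a, nrm a <= N * n a) ->
      [/\ (* (1)(a) q = C(X) *)
          (forall mu nu, is_state d star nrm mu -> is_state d star nrm nu ->
             (mk d star nrm (L_CX d nrm n) mu nu <= (2 + N * diam d)%:E)%E),
          (* (2) q = C *)
          (forall mu nu, is_state d star nrm mu -> is_state d star nrm nu ->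
             (mk d star nrm (L_C d nrm n) mu nu <= 2%:E)%E) &
          (* (2) q = phi *)
          (forall mu nu, is_state d star nrm mu -> is_state d star nrm nu ->
             (mk d star nrm (L_phi d nrm phi n) mu nu <= 2%:E)%E)])
  /\
  (* part (1)(b): A = C (with conjugation and modulus) *)
  (forall (phi : (X -> R[i]^o) -> R[i]),
    is_state d (@starC R) (@absC R) phi ->
    forall (n : R[i]^o -> R) (M N : R), is_real_norm n -> 0 < M -> 0 < N ->
      (forall a, M * n a <= absC a) -> (forall a, absC a <= N * n a) ->
      forall mu nu, is_state d (@starC R) (@absC R) mu ->
        is_state d (@starC R) (@absC R) nu ->
        (mk d (@starC R) (@absC R) (L_CX d (@absC R) n) mu nu
           <= (N * diam d)%:E)%E).
Proof.
move=> Hd Hc; split=> [A star nrm HA phi _ n M N _ _ N0 _ hN | phi _ n M N _ _ N0 _ hN].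
  split=> mu nu Hmu Hnu.
  - exact: (mk_L_CX_le Hd Hc HA Hmu Hnu N0 hN).
  - exact: (mk_L_C_le Hc HA Hmu Hnu).
  - exact: (mk_L_phi_le Hc HA Hmu Hnu).
by move=> mu nu Hmu Hnu; exact: (mk_L_CX_le_complex Hd Hc Hmu Hnu N0 hN).
Qed.
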